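(* Let $c,M\in\mathbb{N}$ with $c,M\ge1$, and let $A_{c,M}=(n_A)_{n\ge0}$ be defined by $0_A=1$, $n_A=1$ for $1\le n<M$, and $n_A=c$ for $n\ge M$. Then $A_{c,M}$ is a cobweb tiling sequence. (In particular, for $M=1$, the almost constant sequence $0_A=1$, $n_A=c$ for $n\ge1$, is a cobweb tiling sequence.)
   Context: Notation: $n_F\equiv F_n$. A sequence $F=(n_F)_{n\ge0}$ of natural numbers with $0_F=1$ is cobweb-admissible iff every $F$-nomial coefficient $\binom{n}{k}_F=\frac{n_F(n-1)_F\cdots(n-k+1)_F}{1_F2_F\cdots k_F}$, $0\le k\le n$, is a nonnegative integer. The cobweb poset of $F$ has, for each $s\ge1$, a level $\Phi_s$ consisting of $s_F$ distinct vertices (levels pairwise disjoint), plus a root level $\Phi_0$ with one vertex; for $x\in\Phi_i$, $y\in\Phi_j$ one has $x<y$ iff $i<j$. For $1\le a\le b$, the layer $\langle\Phi_a\to\Phi_b\rangle$ is the subposet on $\Phi_a\cup\dots\cup\Phi_b$; it has $m=b-a+1$ levels and its maximal chains form the set $\Phi_a\times\dots\times\Phi_b$. For a permutation $\sigma$ of $\{1,\dots,m\}$, a block of type $\sigma P_m$ in this layer is the subposet induced on $V_a\cup\dots\cup V_b$ where $V_{a-1+i}\subseteq\Phi_{a-1+i}$ and $|V_{a-1+i}|=\sigma(i)_F$ for $i=1,\dots,m$; its maximal chains form the set $V_a\times\dots\times V_b$. A tiling of the layer is a finite family of such blocks ($\sigma$ may vary from block to block) whose sets $V_a\times\dots\times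 V_b$ partition $\Phi_a\times\dots\times\Phi_b$ (pairwise max-disjoint and covering all maximal chains). A cobweb tiling sequence is a cobweb-admissible sequence $F$ such that for all $1\le a\le b$ the layer $\langle\Phi_a\to\Phi_b\rangle$ admits a tiling by blocks of type $\sigma P_{b-a+1}$. *)

From mathcomp Require Import all_boot all_fingroup.
Set Implicit Arguments. Unset Strict Implicit. Unset Printing Implicit Defensive.

Definition fnom_num (F : nat -> nat) (n k : nat) : nat := \prod_(i < k) F (n - i).
Definition fnom_den (F : nat -> nat) (k : nat) : nat := \prod_(i < k) F i.+1.

(* Cobweb-admissible: 0_F = 1 and every F-nomial coefficient (num/den) is a
   nonnegative integer, i.e. the denominator is nonzero and divides the numerator. *)
Definition cobweb_admissible (F : nat -> nat) : Prop :=
  F 0 = 1 /\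
  forall n k, k <= n -> 0 < fnom_den F k /\ fnom_den F k %| fnom_num F n k.

(* Level Phi_s of the cobweb poset is represented by 'I_(F s).
   The layer <Phi_a -> Phi_(a+m-1)> has m levels; level number i : 'I_m of the
   layer is Phi_(a+i).  A maximal chain is a choice x i \in Phi_(a+i) for each i. *)
Definition layer_chain (F : nat -> nat) (a m : nat) : Type :=
  forall i : 'I_m, 'I_(F (a + i)).

Definition block_sets (F : nat -> nat) (a m : nat) : Type :=
  forall i : 'I_m, {set 'I_(F (a + i))}.

(* V is a block of type sigma P_m: |V_(a-1+i)| = sigma(i)_F for i = 1..m;
   with 0-based indices i : 'I_m and sigma : 'S_m this reads
   #|V i| = F (sigma i + 1). *)
Definition is_block_of_type (F : nat -> nat) (a m : nat) (sigma : 'S_m)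
  (V : block_sets F a m) : Prop :=
  forall i : 'I_m, #|V i| = F (sigma i).+1.

Definition chain_in_block (F : nat -> nat) (a m : nat) (V : block_sets F a m)
  (x : layer_chain F a m) : Prop :=
  forall i : 'I_m, x i \in V i.

Definition layer_tileable (F : nat -> nat) (a m : nat) : Prop :=
  exists (k : nat) (sigma : 'I_k -> 'S_m) (V : 'I_k -> block_sets F a m),
    (forall j : 'I_k, is_block_of_type (sigma j) (V j)) /\
    (forall x : layer_chain F a m, exists j : 'I_k, chain_in_block (V j) x) /\
    (forall (j1 j2 : 'I_k) (x : layer_chain F a m),
        chain_in_block (V j1) x -> chain_in_block (V j2) x -> j1 = j2).

Definition cobweb_tiling_sequence (F : nat -> nat) : Prop :=
  cobweb_admissible F /\
  forall a b : nat, 1 <= a -> a <= b -> layer_tileable F a (b - a + 1).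

Definition A_seq (c M : nat) (n : nat) : nat :=
  if n == 0 then 1 else if n < M then 1 else c.

From mathcomp Require Import all_boot all_fingroup.
From mathcomp Require Import zify.
Set Implicit Arguments. Unset Strict Implicit. Unset Printing Implicit Defensive.

(* The sequence A_{c,M} = 1, 1, ..., 1, c, c, ... is a divisibility chain:
   p_F divides q_F whenever 1 <= p <= q.  We prove that every divisibility
   chain F with 0_F = 1 and positive terms is a cobweb tiling sequence.
   - Admissibility: pairing the factor (i+1)_F of the denominator of the
     F-nomial coefficient with the factor (n-k+i+1)_F of its numerator,
     each factor divides its partner, hence so do the products.
   - Tiling: in the layer starting at level a >= 1, level i (counted from 0)
     has (a+i)_F vertices, a multiple of (i+1)_F.  Cutting each level into
     consecutive chunks of (i+1)_F vertices and taking all products of one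
     chunk per level gives blocks of type id P_m that partition the maximal
     chains of the layer. *)

Definition divisibility_chain (F : nat -> nat) : Prop :=
  forall p q, 0 < p -> p <= q -> F p %| F q.

Lemma divisibility_chain_admissible (F : nat -> nat) :
  F 0 = 1 -> (forall n, 0 < n -> 0 < F n) -> divisibility_chain F ->
  cobweb_admissible F.
Proof.
move=> F0 F_pos F_dvd; split=> // n k le_kn; split.
  by apply: prodn_gt0 => i; exact: F_pos.
(* Reverse the numerator so that its i-th factor is (n-k+i+1)_F. *)
rewrite /fnom_den /fnom_num (reindex_inj rev_ord_inj) /=.
apply: (big_ind2 (fun d x => d %| x)) => [|d1 d2 x1 x2|i _]; first exact: dvdnn.
  exact: dvdn_mul.
by apply: F_dvd => //; have := ltn_ord i; lia.
Qed.

Lemma card_chunk (n d t : nat) : 0 < d -> d %| n -> t < n %/ d ->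
  #|[set y : 'I_n | y %/ d == t]| = d.
Proof.
move=> d_gt0 dvd_dn lt_tq.
have lt_n (r : 'I_d) : t * d + r < n.
  rewrite -(divnK dvd_dn); apply: (@leq_trans (t.+1 * d)).
    by rewrite mulSn addnC ltn_add2r.
  by rewrite leq_mul2r lt_tq orbT.
pose shift (r : 'I_d) : 'I_n := Ordinal (lt_n r).
have shift_inj : injective shift.
  by move=> r1 r2 /(congr1 val) /= /addnI /val_inj.
rewrite -[RHS]card_ord -cardsT -(card_imset _ shift_inj).
apply: eq_card => y; rewrite inE; apply/eqP/imsetP => [y_t|[r _ ->]] /=.
  have lt_mod : y %% d < d by rewrite ltn_mod.
  exists (Ordinal lt_mod) => //; apply: val_inj => /=.
  by rewrite -y_t -divn_eq.
by rewrite divnMDl // divn_small ?addn0.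
Qed.

Section ChunkTiling.

Variables (F : nat -> nat) (a m : nat).
Hypothesis F_pos : forall i : 'I_m, 0 < F i.+1.
Hypothesis F_dvd : forall i : 'I_m, F i.+1 %| F (a + i).

(* A block is named by the chunk it uses on every level. *)
Definition chunk_index : finType :=
  {dffun forall i : 'I_m, 'I_(F (a + i) %/ F i.+1)}.

Definition chunk_block (t : chunk_index) : block_sets F a m :=
  fun i => [set y : 'I_(F (a + i)) | y %/ F i.+1 == t i].

Lemma chunk_block_type (t : chunk_index) : is_block_of_type 1%g (chunk_block t).
Proof. by move=> i; rewrite perm1 card_chunk. Qed.

Lemma chunk_blockP (t : chunk_index) (x : layer_chain F a m) :
  chain_in_block (chunk_block t) x <-> forall i, x i %/ F i.+1 = t i.
Proof. by split=> x_in i; [move: (x_in i); rewrite inE => /eqP | rewrite inE x_in]. Qed.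

Definition chunk_of (x : layer_chain F a m) : chunk_index.
Proof.
apply: finfun => i; apply: (@Ordinal _ (x i %/ F i.+1)).
by rewrite ltn_divLR // divnK.
Defined.

Lemma chunk_of_block (x : layer_chain F a m) :
  chain_in_block (chunk_block (chunk_of x)) x.
Proof. by apply/chunk_blockP => i; rewrite ffunE. Qed.

(* Enumerating the chunk blocks gives a tiling; disjointness holds because a
   chain determines the chunks it visits. *)
Lemma chunk_tiling : layer_tileable F a m.
Proof.
exists #|chunk_index|, (fun _ => 1%g), (fun j => chunk_block (enum_val j)).
split; [|split].
- by move=> j; apply: chunk_block_type.
- by move=> x; exists (enum_rank (chunk_of x)); rewrite enum_rankK; exact: chunk_of_block.
- move=> j1 j2 x /chunk_blockP x_in1 /chunk_blockP x_in2; apply: enum_val_inj.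
  by apply/ffunP => i; apply/val_inj; rewrite /= -x_in1 -x_in2.
Qed.

End ChunkTiling.

(* Every divisibility chain with 0_F = 1 and positive terms is a cobweb tiling
   sequence; level i of a layer starting at a >= 1 satisfies (i+1)_F | (a+i)_F. *)
Theorem divisibility_chain_tiling (F : nat -> nat) :
  F 0 = 1 -> (forall n, 0 < n -> 0 < F n) -> divisibility_chain F ->
  cobweb_tiling_sequence F.
Proof.
move=> F0 F_pos F_dvd; split; first exact: divisibility_chain_admissible.
move=> a b a_gt0 _; apply: chunk_tiling => i; first exact: F_pos.
by apply: F_dvd => //; rewrite -add1n leq_add2r.
Qed.

Lemma A_seq_pos (c M n : nat) : 0 < c -> 0 < A_seq c M n.
Proof. by rewrite /A_seq; case: (n == 0) => //; case: (n < M). Qed.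

(* A_{c,M} is constant 1 on [1, M) and constant c from M on. *)
Lemma A_seq_chain (c M : nat) : divisibility_chain (A_seq c M).
Proof.
move=> p q p_gt0 le_pq.
rewrite /A_seq !eqn0Ngt p_gt0 (leq_trans p_gt0 le_pq) /=.
case: ltnP => [_|M_le_p]; first exact: dvd1n.
by rewrite ltnNge (leq_trans M_le_p le_pq).
Qed.

Theorem mainTheorem9 (c M : nat) (hc : 1 <= c) (hM : 1 <= M) :
  cobweb_tiling_sequence (A_seq c M).
Proof.
apply: divisibility_chain_tiling => [//|n _|]; first exact: A_seq_pos.
exact: A_seq_chain.
Qed.
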